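(* Let $\nu\in\mathbb{N}$, let $(X,d)$ be a $\nu$-generalized metric space, and let $\{x_n\}_{n\in\mathbb{N}}$ be a sequence in $X$ whose terms are pairwise distinct and such that $d(x_n,x_{n+1})+d(x_n,x_{n+2})\to0$ as $n\to\infty$. Let $m:X\times X\to[0,\infty)$ be a function such that for any two subsequences $\{x_{p_i}\}$ and $\{x_{q_i}\}$ of $\{x_n\}$, $$\limsup_{i\to\infty} m(x_{p_i},x_{q_i})\le\limsup_{i\to\infty} d(x_{p_i},x_{q_i}).$$ Suppose that for every $\epsilon>0$ and any two subsequences $\{x_{p_i}\}$ and $\{x_{q_i}\}$, if $\limsup_{i\to\infty} m(x_{p_i},x_{q_i})\le\epsilon$, then there is $N$ such that $d(x_{p_i+1},x_{q_i+1})\le\epsilon$ for all $i\ge N$. Then $\{x_n\}$ is Cauchy.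
   Context: Let $X$ be a nonempty set, $d:X\times X\to[0,\infty)$, and $\nu\in\mathbb{N}$. $(X,d)$ is a $\nu$-generalized metric space if: (1) $d(x,y)=0$ iff $x=y$; (2) $d(x,y)=d(y,x)$ for all $x,y$; (3) $d(x,y)\le d(x,u_1)+d(u_1,u_2)+\dots+d(u_\nu,y)$ for every set $\{x,u_1,\dots,u_\nu,y\}$ of $\nu+2$ pairwise distinct elements of $X$. A sequence $\{x_n\}$ in $X$ is Cauchy if $\lim_{n\to\infty}\sup\{d(x_n,x_{n+1+m}): m\in\mathbb{Z}^+\}=0$, where $\mathbb{Z}^+$ denotes the nonnegative integers. A subsequence $\{x_{p_i}\}$ means $p_1<p_2<\cdots$ in $\mathbb{N}$. *)

From Stdlib Require Import Reals Lra.
Open Scope R_scope.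

(* Axiom (3) of a nu-generalized metric space: for every family
   p 0 = x, p 1 = u_1, ..., p nu = u_nu, p (nu+1) = y of nu+2 pairwise
   distinct points, d x y <= d(x,u_1) + ... + d(u_nu,y). *)
Definition gen_triangle {X : Type} (nu : nat) (d : X -> X -> R) : Prop :=
  forall p : nat -> X,
    (forall i j, (i <= S nu)%nat -> (j <= S nu)%nat -> i <> j -> p i <> p j) ->
    d (p 0%nat) (p (S nu)) <= sum_f_R0 (fun i => d (p i) (p (S i))) nu.

Definition gen_metric_space {X : Type} (nu : nat) (d : X -> X -> R) : Prop :=
  (forall x y, 0 <= d x y) /\
  (forall x y, d x y = 0 <-> x = y) /\
  (forall x y, d x y = d y x) /\
  gen_triangle nu d.

(* Cauchy: lim_{n->oo} sup { d(x_n, x_{n+1+m}) : m >= 0 } = 0,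
   written out with epsilon/N (the sup may be +oo for small n). *)
Definition gm_cauchy {X : Type} (d : X -> X -> R) (x : nat -> X) : Prop :=
  forall eps, 0 < eps -> exists N : nat, forall n k : nat, (N <= n)%nat ->
    d (x n) (x (n + 1 + k)%nat) <= eps.

Definition subseq_idx (p : nat -> nat) : Prop := forall i, (p i < p (S i))%nat.

(* Extended reals and limsup (as a relation; limsup always exists and is unique). *)
Inductive ER : Type := Fin (r : R) | PInf | MInf.

Definition ER_le (a b : ER) : Prop :=
  match a, b with
  | MInf, _ => True
  | _, PInf => True
  | Fin r, Fin s => r <= s
  | _, _ => False
  end.

Definition is_limsup (u : nat -> R) (L : ER) : Prop :=
  match L with
  | Fin l =>
      (forall eps, 0 < eps -> exists N : nat, forall i, (N <= i)%nat -> u i < l + eps) /\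
      (forall eps, 0 < eps -> forall N : nat, exists i, (N <= i)%nat /\ l - eps < u i)
  | PInf => forall M : R, forall N : nat, exists i, (N <= i)%nat /\ M < u i
  | MInf => forall M : R, exists N : nat, forall i, (N <= i)%nat -> u i < M
  end.

From Stdlib Require Import Reals Lra Lia Classical ClassicalEpsilon Wf_nat.
From Coquelicot Require Import Coquelicot.
Open Scope R_scope.

(* Suppose the sequence is not Cauchy for some [eps].  Asymptotic regularity
   lets us find, arbitrarily far out and for any [delta > 0], indices [p < q]
   with [d(x_p, x_q) <= eps + delta] but [d(x_{p+1}, x_{q+1}) > eps]: take the
   first [q+1] at which [d(x_{p+1}, .)] exceeds [eps], and go from [x_{p+1}]
   back to [x_p] through [nu] tiny steps among [x_{p+1-nu}, ..., x_{p+1}],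
   which the generalized triangle inequality allows because all the points are
   distinct.  Interleaving such pairs gives subsequences along which
   [limsup d <= eps], hence [limsup m <= eps], so the second hypothesis forces
   [d(x_{p_i+1}, x_{q_i+1}) <= eps] eventually: a contradiction. *)

Definition ER_of_Rbar (l : Rbar) : ER :=
  match l with Finite r => Fin r | p_infty => PInf | m_infty => MInf end.

Lemma is_limsup_exists (u : nat -> R) : exists L, is_limsup u L.
Proof.
  destruct (ex_LimSup_seq u) as [l Hl]; exists (ER_of_Rbar l).
  destruct l as [r| |]; simpl in *; [split | exact Hl | exact Hl].
  - intros e He. exact (proj2 (Hl (mkposreal e He))).
  - intros e He. exact (proj1 (Hl (mkposreal e He))).
Qed.

Lemma ER_le_trans (a b c : ER) : ER_le a b -> ER_le b c -> ER_le a c.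
Proof. destruct a, b, c; simpl; tauto || lra. Qed.

Lemma is_limsup_le_Fin (u : nat -> R) (a : R) (L : ER) :
  (forall delta, 0 < delta -> exists N, forall i, (N <= i)%nat -> u i <= a + delta) ->
  is_limsup u L -> ER_le L (Fin a).
Proof.
  intros Hu HL; destruct L as [l| |]; simpl in *; auto.
  - apply Rnot_lt_le; intro Hal.
    destruct (Hu ((l - a) / 2)) as [N HN]; [lra|].
    destruct (proj2 HL ((l - a) / 2) ltac:(lra) N) as [i [Hi Hui]].
    specialize (HN i Hi); lra.
  - destruct (Hu 1 Rlt_0_1) as [N HN].
    destruct (HL (a + 1) N) as [i [Hi Hui]].
    specialize (HN i Hi); lra.
Qed.

Lemma inv_INR_S_eventually_lt (delta : R) :
  0 < delta -> exists N, forall i, (N <= i)%nat -> / INR (S i) < delta.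
Proof.
  intro Hdelta; destruct (archimed_cor1 delta Hdelta) as [N [HN HN0]].
  exists N; intros i Hi.
  apply Rle_lt_trans with (/ INR N); [|exact HN].
  apply Rinv_le_contravar; [apply lt_0_INR; lia | apply le_INR; lia].
Qed.

Lemma interleaved_subseq_idx (Rel : nat -> nat -> nat -> Prop) :
  (forall i B, exists p q, (B <= p < q)%nat /\ Rel i p q) ->
  exists P Q, subseq_idx P /\ subseq_idx Q /\ forall i, Rel i (P i) (Q i).
Proof.
  intro Hex.
  assert (Hchoice : forall i B, {pq | (B <= fst pq < snd pq)%nat /\ Rel i (fst pq) (snd pq)}).
  { intros i B; apply constructive_indefinite_description.
    destruct (Hex i B) as [p [q Hpq]]; now exists (p, q). }
  pose (pr := fix pr (i : nat) : nat * nat :=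
          match i with
          | O => proj1_sig (Hchoice O O)
          | S i => proj1_sig (Hchoice (S i) (S (snd (pr i))))
          end).
  assert (Hpr : forall i,
    ((match i with O => O | S j => S (snd (pr j)) end) <= fst (pr i) < snd (pr i))%nat
    /\ Rel i (fst (pr i)) (snd (pr i))).
  { intros [|i]; simpl; apply proj2_sig. }
  exists (fun i => fst (pr i)), (fun i => snd (pr i)); repeat split.
  - intro i; pose proof (Hpr i); pose proof (Hpr (S i)); simpl in *; lia.
  - intro i; pose proof (Hpr i); pose proof (Hpr (S i)); simpl in *; lia.
  - intro i; exact (proj2 (Hpr i)).
Qed.

(* [0, 2, 4, ...] followed by the odd numbers downwards, ending at [1]: an
   enumeration of [0..M] whose consecutive values differ by 1 or 2. *)
Definition zigzag (M t : nat) : nat :=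
  if Nat.leb (2 * t) M then (2 * t)%nat else (2 * (M - t) + 1)%nat.

Lemma zigzag_le M t : (t <= M)%nat -> (zigzag M t <= M)%nat.
Proof. unfold zigzag; destruct (Nat.leb_spec (2 * t) M); lia. Qed.

Lemma zigzag_inj M t s :
  (t <= M)%nat -> (s <= M)%nat -> zigzag M t = zigzag M s -> t = s.
Proof.
  unfold zigzag; destruct (Nat.leb_spec (2 * t) M), (Nat.leb_spec (2 * s) M); lia.
Qed.

Lemma zigzag_last M : (1 <= M)%nat -> zigzag M M = 1%nat.
Proof. unfold zigzag; destruct (Nat.leb_spec (2 * M) M); lia. Qed.

Lemma zigzag_step M t : (t < M)%nat ->
  (zigzag M (S t) = zigzag M t + 1 \/ zigzag M (S t) = zigzag M t + 2 \/
   zigzag M t = zigzag M (S t) + 1 \/ zigzag M t = zigzag M (S t) + 2)%nat.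
Proof.
  unfold zigzag; destruct (Nat.leb_spec (2 * t) M), (Nat.leb_spec (2 * S t) M); lia.
Qed.

Section AsymptoticallyRegular.

Variables (X : Type) (nu : nat) (d : X -> X -> R) (x : nat -> X).

Hypothesis nu_pos : (1 <= nu)%nat.
Hypothesis d_metric : gen_metric_space nu d.
Hypothesis x_inj : forall i j : nat, i <> j -> x i <> x j.
Hypothesis x_asymp_reg :
  Un_cv (fun n => d (x n) (x (S n)) + d (x n) (x (S (S n)))) 0.

Lemma dist_S_SS_eventually_lt (eta : R) : 0 < eta ->
  exists N, forall u, (N <= u)%nat ->
    d (x u) (x (S u)) < eta /\ d (x u) (x (S (S u))) < eta.
Proof.
  intro Heta; destruct d_metric as [d_ge0 _].
  destruct (x_asymp_reg eta Heta) as [N HN]; exists N; intros u Hu.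
  specialize (HN u Hu); unfold R_dist in HN; rewrite Rminus_0_r in HN.
  apply Rabs_def2 in HN as [HN _].
  pose proof (d_ge0 (x u) (x (S u))); pose proof (d_ge0 (x u) (x (S (S u)))); lra.
Qed.

Lemma dist_pred_le (n c : nat) (eta : R) :
  (nu <= n)%nat -> (n < c)%nat ->
  (forall u, (n - nu <= u)%nat ->
     d (x u) (x (S u)) <= eta /\ d (x u) (x (S (S u))) <= eta) ->
  d (x c) (x (n - 1)) <= d (x c) (x n) + INR nu * eta.
Proof.
  intros Hn Hc Hsmall; destruct d_metric as [_ [_ [d_sym d_tri]]].
  assert (Hnear : forall u v, (n - nu <= u)%nat -> (n - nu <= v)%nat ->
            (v = S u \/ v = S (S u) \/ u = S v \/ u = S (S v))%nat ->
            d (x u) (x v) <= eta).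
  { intros u v Hu Hv [-> | [-> | [-> | ->]]]; rewrite ?(d_sym (x (S _))); apply Hsmall; lia. }
  pose (path t := match t with O => x c | S t => x (n - zigzag nu t)%nat end).
  assert (path_inj : forall i j, (i <= S nu)%nat -> (j <= S nu)%nat -> i <> j ->
            path i <> path j).
  { intros [|t] [|s] Hi Hj Hij; simpl; try congruence; apply x_inj.
    - pose proof (zigzag_le nu s); lia.
    - pose proof (zigzag_le nu t); lia.
    - intro E; apply Hij; f_equal; apply (zigzag_inj nu); try lia.
      pose proof (zigzag_le nu t); pose proof (zigzag_le nu s); lia. }
  specialize (d_tri path path_inj); simpl in d_tri.
  rewrite zigzag_last, decomp_sum in d_tri by lia; simpl in d_tri.
  change (zigzag nu 0) with 0%nat in d_tri; rewrite Nat.sub_0_r in d_tri.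
  assert (Hsteps : sum_f_R0 (fun t => d (x (n - zigzag nu t)%nat)
                                        (x (n - zigzag nu (S t))%nat)) (pred nu)
                   <= INR nu * eta).
  { replace (INR nu * eta) with (sum_f_R0 (fun _ => eta) (pred nu))
      by (rewrite sum_cte, Nat.succ_pred_pos by lia; apply Rmult_comm).
    apply sum_Rle; intros t Ht; simpl.
    pose proof (zigzag_le nu t); pose proof (zigzag_le nu (S t));
      pose proof (zigzag_step nu t).
    apply Hnear; lia. }
  lra.
Qed.

Lemma not_cauchy_crossing_pair (eps delta : R) (B : nat) :
  0 < eps -> 0 < delta ->
  (forall N, exists n k, (N <= n)%nat /\ eps < d (x n) (x (n + 1 + k)%nat)) ->
  exists p q, (B <= p < q)%nat /\
    d (x p) (x q) <= eps + delta /\ eps < d (x (S p)) (x (S q)).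
Proof.
  intros Heps Hdelta Hfar; destruct d_metric as [_ [_ [d_sym _]]].
  assert (Hnu : 0 < INR nu) by (apply lt_0_INR; lia).
  destruct (dist_S_SS_eventually_lt (delta / INR nu)) as [N0 HN0].
  { apply Rdiv_lt_0_compat; lra. }
  destruct (dist_S_SS_eventually_lt eps Heps) as [N1 HN1].
  destruct (Hfar (N0 + N1 + B + nu + 1)%nat) as [n [k [Hn Hnk]]].
  destruct (dec_inh_nat_subset_has_unique_least_element
              (fun b => (n < b)%nat /\ eps < d (x n) (x b)) (fun b => classic _))
    as [b [[[Hnb Hb] Hmin] _]].
  { exists (n + 1 + k)%nat; split; [lia | exact Hnk]. }
  assert (Hb2 : (n + 2 <= b)%nat).
  { destruct (Nat.eq_dec b (S n)) as [->|]; [|lia].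
    pose proof (HN1 n ltac:(lia)); lra. }
  assert (Hb_pred : d (x (b - 1)%nat) (x n) <= eps).
  { rewrite d_sym; apply Rnot_lt_le; intro Hlt.
    assert (Hnb1 : (n < b - 1)%nat) by lia.
    pose proof (Hmin (b - 1)%nat (conj Hnb1 Hlt)); lia. }
  exists (n - 1)%nat, (b - 1)%nat.
  replace (S (n - 1)) with n by lia; replace (S (b - 1)) with b by lia.
  repeat split; try lia; [|exact Hb].
  rewrite d_sym.
  eapply Rle_trans; [apply (dist_pred_le n (b - 1) (delta / INR nu)); try lia|].
  - intros u Hu; pose proof (HN0 u ltac:(lia)); lra.
  - replace (INR nu * (delta / INR nu)) with delta by (field; lra); lra.
Qed.

End AsymptoticallyRegular.

Theorem theorem2p3 (X : Type) (nu : nat) (d m : X -> X -> R) (x : nat -> X) :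
  (1 <= nu)%nat ->
  gen_metric_space nu d ->
  (forall i j : nat, i <> j -> x i <> x j) ->
  Un_cv (fun n => d (x n) (x (S n)) + d (x n) (x (S (S n)))) 0 ->
  (forall a b, 0 <= m a b) ->
  (forall p q : nat -> nat, subseq_idx p -> subseq_idx q ->
     forall L1 L2 : ER,
       is_limsup (fun i => m (x (p i)) (x (q i))) L1 ->
       is_limsup (fun i => d (x (p i)) (x (q i))) L2 ->
       ER_le L1 L2) ->
  (forall eps : R, 0 < eps ->
     forall p q : nat -> nat, subseq_idx p -> subseq_idx q ->
     forall L : ER, is_limsup (fun i => m (x (p i)) (x (q i))) L ->
       ER_le L (Fin eps) ->
       exists N : nat, forall i : nat, (N <= i)%nat ->
         d (x (S (p i))) (x (S (q i))) <= eps) ->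
  gm_cauchy d x.
Proof.
  intros Hnu Hd Hinj Hreg _ Hm_le Hm_small eps Heps; apply NNPP; intro Hnot.
  assert (Hfar : forall N, exists n k, (N <= n)%nat /\ eps < d (x n) (x (n + 1 + k)%nat)).
  { intro N; apply NNPP; intro H; apply Hnot; exists N; intros n k Hn.
    apply Rnot_lt_le; intro Hlt; apply H; eauto. }
  destruct (interleaved_subseq_idx (fun i p q =>
              d (x p) (x q) <= eps + / INR (S i) /\ eps < d (x (S p)) (x (S q))))
    as [P [Q [HP [HQ HPQ]]]].
  { intros i B; apply (not_cauchy_crossing_pair X nu d x); auto.
    apply Rinv_0_lt_compat, lt_0_INR; lia. }
  destruct (is_limsup_exists (fun i => m (x (P i)) (x (Q i)))) as [Lm HLm].
  destruct (is_limsup_exists (fun i => d (x (P i)) (x (Q i)))) as [Ld HLd].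
  assert (HLd_le : ER_le Ld (Fin eps)).
  { apply (is_limsup_le_Fin _ _ _) with (2 := HLd); intros delta Hdelta.
    destruct (inv_INR_S_eventually_lt delta Hdelta) as [N HN]; exists N; intros i Hi.
    pose proof (proj1 (HPQ i)); pose proof (HN i Hi); lra. }
  destruct (Hm_small eps Heps P Q HP HQ Lm HLm
              (ER_le_trans _ _ _ (Hm_le P Q HP HQ Lm Ld HLm HLd) HLd_le)) as [N HN].
  pose proof (HN N (le_n N)); pose proof (proj2 (HPQ N)); lra.
Qed.
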